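(* Let $\mathcal{M}\subseteq\binom{[n]}{k}$ be a positroid with Grassmann necklace $(I_1,\dots,I_n)$ and decorated permutation $\pi^{:}=(\pi,col)$, and let $j\in[n]$ with $\pi(j)\neq j$. Put $\mathcal{M}':=\{H\in\mathcal{M} : j\in H\}$. Then for every $a\in[n]$ with $j\notin I_a$, the set $I_a\setminus I_j$ is nonempty and $$\bigl(I_a\setminus\{\max_a(I_a\setminus I_j)\}\bigr)\cup\{j\}\in\mathcal{M}'.$$
   Context: Indices are taken modulo $n$; we identify $[n]$ with $\mathbb{Z}_n$. For $t\in[n]$, the total order $\le_t$ on $[n]$ is $t<_t t+1<_t\cdots<_t n<_t 1<_t\cdots<_t t-1$. For $A,B\in\binom{[n]}{k}$ with $A=\{i_1<_t\cdots<_t i_k\}$ and $B=\{j_1<_t\cdots<_t j_k\}$, write $A\le_t B$ (Gale order) iff $i_s\le_t j_s$ for all $s$. For $D\subseteq[n]$, $\max_a(D)$ is the largest element of $D$ in $\le_a$. A Grassmann necklace is a sequence $(I_1,\dots,I_n)$ of subsets of $[n]$ such that for each $i$: if $i\in I_i$ then $I_{i+1}=(I_i\setminus\{i\})\cup\{j'\}$ for some $j'\in[n]$, and if $i\notin I_i$ then $I_{i+1}=I_i$. A positroid is a set $\mathcal{M}\subseteq\binom{[n]}{k}$ for which there is a Grassmann necklace $(I_1,\dots,I_n)$ with $\mathcal{M}=\{H : H\ge_t I_t \text{ for all } t\in[n]\}$; then $I_t$ is the $\le_t$-minimum of $\mathcal{M}$ and $(I_1,\dots,I_n)$ is called the Grassmann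 necklace of $\mathcal{M}$. A decorated permutation is a pair $(\pi,col)$ with $\pi\in S_n$ and $col$ a function from the fixed points of $\pi$ to $\{1,-1\}$. The necklace and decorated permutation correspond bijectively via: if $I_{i+1}=(I_i\setminus\{i\})\cup\{j'\}$ with $j'\ne i$ then $\pi(i)=j'$; if $I_{i+1}=I_i$ and $i\notin I_i$ then $\pi(i)=i$, $col(i)=1$; if $I_{i+1}=I_i$ and $i\in I_i$ then $\pi(i)=i$, $col(i)=-1$. Conversely $I_r=\{i\in[n] : i<_r\pi^{-1}(i)\text{ or }(\pi(i)=i\text{ and }col(i)=-1)\}$. *)

(* [n] is represented by 'I_n (0-based; 0..n-1), identified with Z_n;
   i+1 is the cyclic successor ordS. *)
From mathcomp Require Import all_boot.
Set Implicit Arguments. Unset Strict Implicit. Unset Printing Implicit Defensive.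

Section Positroid.
Variable n : nat.
Local Notation E := 'I_n.

(* position of x in the cyclic order <=_t : t, t+1, ..., t-1 *)
Definition cyc_rank (t x : E) : nat := (x + n - t) %% n.
Definition cyc_le (t : E) : rel E := fun x y => cyc_rank t x <= cyc_rank t y.

Definition cyc_sorted (t : E) (A : {set E}) : seq E := sort (cyc_le t) (enum A).

Definition gale_le (t : E) (A B : {set E}) : bool :=
  (#|A| == #|B|) &&
  all (fun s => cyc_le t (nth t (cyc_sorted t A) s) (nth t (cyc_sorted t B) s))
      (iota 0 #|A|).

(* max_a(D): largest element of D in <=_a (default a if D is empty) *)
Definition cyc_max (a : E) (D : {set E}) : E :=
  odflt a [pick m in D | [forall y in D, cyc_le a y m]].

Definition grassmann_necklace (I : E -> {set E}) : Prop :=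
  forall i : E,
    (i \in I i -> exists j' : E, I (ordS i) = (I i :\ i) :|: [set j']) /\
    (i \notin I i -> I (ordS i) = I i).

Definition positroid_of (k : nat) (I : E -> {set E}) : {set {set E}} :=
  [set H : {set E} | (#|H| == k) && [forall t, gale_le t (I t) H]].

(* permutation part pi of the decorated permutation of the necklace I:
   pi(i) = j' if I_{i+1} = (I_i \ {i}) u {j'} with j' <> i, and pi(i) = i otherwise *)
Definition neck_perm (I : E -> {set E}) (i : E) : E :=
  odflt i [pick j' | (j' != i) && (i \in I i) && (I (ordS i) == (I i :\ i) :|: [set j'])].

End Positroid.

From mathcomp Require Import all_boot zify.
Set Implicit Arguments. Unset Strict Implicit. Unset Printing Implicit Defensive.

(* Write P_t(q) for the first q elements of [n] in the cyclic order <=_t.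
   1. Counting criterion: A <=_t B (for #|A| = #|B|) holds as soon as
      #|B :&: P_t(q)| <= #|A :&: P_t(q)| for every q <= n.
   2. Minimality of the necklace: along t, t+1, ..., t+n = t the count
      #|I_s :&: P_t(p)| can only decrease while s runs through P_t(p) (the
      element s leaves, at most one enters) and only increase afterwards (no
      element of P_t(p) leaves), so every I_s has count <= that of I_t.
      Moreover an element y of I_r stays in I_{r+1}, ..., I_y.
   3. The exchange: as pi(j) <> j we have j \in I_j.  Let m be the <=_a-largest
      element of I_a \ I_j and H = (I_a \ {m}) u {j}.  Comparing the counts of
      H and of I_t on each P_t(p), using 2 and the cyclic position of j
      between a and m (m must leave the necklace between a and j), gives
      H >=_t I_t for all t by 1, i.e. H is in the positroid, and j \in H. *)

Section CyclicOrder.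
Variable n : nat.
Local Notation E := 'I_n.

Definition cyc_prefix (t : E) (q : nat) : {set E} := [set y | cyc_rank t y < q].

(* t + i, computed by i cyclic successor steps as in the necklace axiom. *)
Definition shift (t : E) (i : nat) : E := iter i (@ordS n) t.

Lemma val_shift (t : E) i : val (shift t i) = (t + i) %% n.
Proof.
elim: i => [|i IH] /=; first by rewrite addn0 modn_small.
by rewrite /shift /= -/(shift t i) IH -addn1 modnDml addn1 addnS.
Qed.

Lemma rank_shift (t : E) i : cyc_rank t (shift t i) = i %% n.
Proof.
rewrite /cyc_rank val_shift.
have ht : t <= n by apply: ltnW.
by rewrite -addnBA // modnDml -addnA (addnC i) addnA subnKC // modnDl.
Qed.

Lemma shift_rank (t r : E) : shift t (cyc_rank t r) = r.
Proof.
apply: val_inj; rewrite val_shift /cyc_rank.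
have ht : t <= n by apply: ltnW.
rewrite modnDmr addnBA; last by rewrite (leq_trans ht) // leq_addl.
by rewrite addKn modnDr modn_small.
Qed.

Lemma rank_lt (t r : E) : cyc_rank t r < n.
Proof. by rewrite ltn_pmod // (leq_ltn_trans (leq0n t) (ltn_ord t)). Qed.

Lemma shift_n (t : E) : shift t n = t.
Proof. by apply: val_inj; rewrite val_shift modnDr modn_small. Qed.

Lemma shiftD (t : E) i k : shift t (i + k) = shift (shift t i) k.
Proof. by rewrite /shift addnC iterD. Qed.

Lemma shift_in_prefix (t : E) i p : i < p <= n -> shift t i \in cyc_prefix t p.
Proof. by move=> /andP[hip hpn]; rewrite inE rank_shift modn_small // (leq_trans hip). Qed.

Lemma rank_rebase (t a x : E) :
  cyc_rank a x = if cyc_rank t a <= cyc_rank t x then cyc_rank t x - cyc_rank t a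
                 else cyc_rank t x + n - cyc_rank t a.
Proof.
set d := cyc_rank t a; set e := cyc_rank t x.
have hd : d < n := rank_lt t a; have he : e < n := rank_lt t x.
set i := if d <= e then e - d else e + n - d.
have hi : i < n by rewrite /i; case: ifP => hde; lia.
rewrite -{1}(shift_rank t a) -{1}(shift_rank t x) -/d -/e.
have -> : shift t e = shift (shift t d) i.
  rewrite -shiftD /i; case: ifP => hde; first by rewrite subnKC.
  by rewrite (_ : d + (e + n - d) = n + e) ?shiftD ?shift_n //; lia.
by rewrite rank_shift modn_small.
Qed.

Lemma cyc_max_spec (a : E) (D : {set E}) : D != set0 ->
  cyc_max a D \in D /\ forall y, y \in D -> cyc_rank a y <= cyc_rank a (cyc_max a D).
Proof.
case/set0Pn => x0 hx0; rewrite /cyc_max.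
case: pickP => [m /andP[hm /forallP hall]|hnone] /=.
  by split=> // y hy; have := hall y; rewrite hy.
case: (arg_maxnP (cyc_rank a) hx0) => m hm hmax.
have : (m \in D) && [forall y in D, cyc_le a y m].
  by rewrite (hm : m \in D); apply/forallP => y; apply/implyP => /hmax.
by rewrite hnone.
Qed.

Lemma card_exchange (X P : {set E}) (s y : E) : s \in X ->
  #|((X :\ s) :|: [set y]) :&: P| + (s \in P) <= #|X :&: P| + (y \in P).
Proof.
move=> sX.
have hsub : ((X :\ s) :|: [set y]) :&: P \subset ((X :&: P) :\ s) :|: ([set y] :&: P).
  apply/subsetP => z; rewrite !inE.
  by case: (z == s) (z == y) (z \in X) (z \in P) => [] [] [] [].
have hy : #|[set y] :&: P| <= (y \in P).
  case: (boolP (y \in P)) => yP.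
    by rewrite (leq_trans (subset_leq_card (subsetIl _ _))) ?cards1.
  rewrite (_ : _ :&: _ = set0) ?cards0 //; apply/setP => z; rewrite !inE.
  by case: eqP => // ->; rewrite (negbTE yP).
rewrite (cardsD1 s (X :&: P)) inE sX /= addnC -addnA leq_add2l.
apply: leq_trans (subset_leq_card hsub) _; rewrite cardsU.
by apply: leq_trans (leq_subr _ _) _; rewrite leq_add2l.
Qed.

End CyclicOrder.

Section GaleCounting.
Variable n : nat.
Local Notation E := 'I_n.

Lemma cyc_le_trans (t : E) : transitive (cyc_le t).
Proof. by move=> x y z; apply: leq_trans. Qed.

Lemma cyc_le_total (t : E) : total (cyc_le t).
Proof. by move=> x y; apply: leq_total. Qed.

Lemma sorted_cyc_sorted (t : E) (C : {set E}) : sorted (cyc_le t) (cyc_sorted t C).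
Proof. exact/sort_sorted/cyc_le_total. Qed.

Lemma size_cyc_sorted (t : E) (C : {set E}) : size (cyc_sorted t C) = #|C|.
Proof. by rewrite size_sort cardE. Qed.

Lemma card_prefix_count (t : E) (C : {set E}) q :
  #|C :&: cyc_prefix t q| = count (fun y => cyc_rank t y < q) (cyc_sorted t C).
Proof.
rewrite cardE (perm_size (enum_setI _ _)) size_filter.
rewrite (permP (_ : perm_eq (cyc_sorted t C) (enum C))) ?perm_sort //.
by apply: eq_count => y; rewrite inE.
Qed.

(* Counting criterion for the Gale order: if the s-th element b of B came
   strictly before the s-th element of A, the prefix ending at b would hold
   s+1 elements of B but at most s elements of A. *)
Lemma gale_of_prefix_counts (t : E) (A B : {set E}) : #|A| = #|B| ->
  (forall q, q <= n -> #|B :&: cyc_prefix t q| <= #|A :&: cyc_prefix t q|) ->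
  gale_le t A B.
Proof.
move=> hAB hq; rewrite /gale_le hAB eqxx /=.
apply/allP => s; rewrite mem_iota add0n => /andP[_ hs].
set sA := cyc_sorted t A; set sB := cyc_sorted t B.
have szA : size sA = #|B| by rewrite size_cyc_sorted.
have szB : size sB = #|B| by rewrite size_cyc_sorted.
have le_nth := sorted_leq_nth (@cyc_le_trans t) (fun x => leqnn (cyc_rank t x)) t.
rewrite /cyc_le leqNgt; apply/negP => hlt.
set b := nth t sB s; set pr := fun y : E => cyc_rank t y < (cyc_rank t b).+1.
have countB : s.+1 <= count pr sB.
  rewrite -(cat_take_drop s.+1 sB) count_cat; apply: leq_trans (leq_addr _ _).
  have szt : size (take s.+1 sB) = s.+1 by rewrite size_takel // szB.
  suff /eqP -> : count pr (take s.+1 sB) == size (take s.+1 sB) by rewrite szt.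
  rewrite -all_count; apply/(all_nthP t) => i; rewrite szt => hi.
  rewrite nth_take // /pr ltnS.
  by apply: le_nth; rewrite ?sorted_cyc_sorted ?inE ?szB // (leq_trans hi).
have countA : count pr sA <= s.
  rewrite -(cat_take_drop s sA) count_cat.
  have -> : count pr (drop s sA) = 0.
    apply/eqP; rewrite -leqn0 leqNgt -has_count; apply/(has_nthP t) => -[i].
    rewrite size_drop nth_drop /pr ltnS => hi; apply/negP; rewrite -ltnNge.
    apply: leq_trans hlt _; apply: le_nth; rewrite ?sorted_cyc_sorted ?inE ?szA //; lia.
  by rewrite addn0 (leq_trans (count_size _ _)) // size_take; case: ifP => //; lia.
have := hq _ (rank_lt t b); rewrite !card_prefix_count -/sA -/sB -/pr; lia.
Qed.

End GaleCounting.

Section Necklace.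
Variable n : nat.
Local Notation E := 'I_n.
Variable I : E -> {set E}.
Hypothesis hI : grassmann_necklace I.

Lemma necklace_keep (s y : E) : y \in I s -> y != s -> y \in I (ordS s).
Proof.
move=> hy hys; have [h1 h2] := hI s.
case: (boolP (s \in I s)) => hs; last by rewrite h2.
by have [j' ->] := h1 hs; rewrite in_setU in_setD1 hys hy.
Qed.

(* Stepping past s \in P, s leaves and at most one element enters: the count
   in P does not increase.  Stepping past s \notin P nothing of P leaves. *)
Lemma necklace_step_in (s : E) (P : {set E}) : s \in P ->
  #|I (ordS s) :&: P| <= #|I s :&: P|.
Proof.
move=> sP; have [h1 h2] := hI s.
case: (boolP (s \in I s)) => hs; last by rewrite h2.
have [j' ->] := h1 hs.
by have := card_exchange P j' hs; rewrite sP; case: (j' \in P); lia.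
Qed.

Lemma necklace_step_out (s : E) (P : {set E}) : s \notin P ->
  #|I s :&: P| <= #|I (ordS s) :&: P|.
Proof.
move=> sP; apply/subset_leq_card/subsetP => y; rewrite !inE => /andP[hy yP].
by rewrite yP andbT necklace_keep //; apply: contraNneq sP => <-.
Qed.

Lemma necklace_step_enter (s y : E) (P : {set E}) : s \in P -> y \notin I s ->
  y \in I (ordS s) -> y \notin P -> #|I (ordS s) :&: P| < #|I s :&: P|.
Proof.
move=> sP ys ys' yP; have [h1 h2] := hI s.
case: (boolP (s \in I s)) => hs; last by move: ys'; rewrite h2 // (negbTE ys).
have [j' hj'] := h1 hs; rewrite hj' in ys' *.
have <- : y = j' by move: ys'; rewrite !inE (negbTE ys) andbF => /eqP.
by have := card_exchange P y hs; rewrite sP (negbTE yP); lia.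
Qed.

Lemma necklace_persist (r y : E) : y \in I r ->
  forall i, i <= cyc_rank r y -> y \in I (shift r i).
Proof.
move=> hy; elim=> [|i IH] hi //=.
rewrite /shift /= -/(shift r i) necklace_keep ?IH ?(ltnW hi) //.
have hin : i < n by apply: leq_ltn_trans (ltnW hi) (rank_lt r y).
by apply: contraTneq hi => ->; rewrite rank_shift modn_small ?ltnn.
Qed.

Lemma necklace_first_entry (t y : E) d : y \notin I t -> y \in I (shift t d) ->
  exists2 i, i < d & (y \notin I (shift t i)) && (y \in I (shift t i.+1)).
Proof.
move=> h0; elim: d => [|d IH] hd; first by rewrite hd in h0.
case: (boolP (y \in I (shift t d))) => h; last by exists d => //; rewrite h hd.
by have [i hi hh] := IH h; exists i => //; apply: ltnW.
Qed.

Section PrefixCounts.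
Variables (t : E) (p : nat).
Hypothesis hp : p <= n.
Local Notation P := (cyc_prefix t p).

Lemma prefix_count_decr i i' : i <= i' -> i' <= p ->
  #|I (shift t i') :&: P| <= #|I (shift t i) :&: P|.
Proof.
move=> hii'; elim: i' hii' => [|i' IH]; first by rewrite leqn0 => /eqP->.
rewrite leq_eqVlt => /orP[/eqP<-//|hi] hi'.
apply: leq_trans (IH hi (ltnW hi')).
by rewrite /shift /= -/(shift t i'); apply/necklace_step_in/shift_in_prefix/andP.
Qed.

Lemma prefix_count_incr i : p <= i <= n ->
  #|I (shift t i) :&: P| <= #|I t :&: P|.
Proof.
move=> /andP[hpi hin]; rewrite -(subKn hin).
elim: (n - i) (leq_sub2l n hpi) => [|d IH] hd; first by rewrite subn0 shift_n.
apply: leq_trans (IH (ltnW hd)); rewrite (_ : n - d = (n - d.+1).+1); last by lia.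
rewrite /shift /= -/(shift t (n - d.+1)).
by apply: necklace_step_out; rewrite inE rank_shift modn_small -?leqNgt; lia.
Qed.

Lemma prefix_count_le (s : E) : #|I s :&: P| <= #|I t :&: P|.
Proof.
rewrite -(shift_rank t s); have hs := rank_lt t s.
case: (leqP (cyc_rank t s) p) => hsp; first exact: (@prefix_count_decr 0).
by apply: prefix_count_incr; rewrite (ltnW hsp) (ltnW hs).
Qed.

End PrefixCounts.

Section Exchange.
Variables (a j m : E).
Hypotheses (hjj : j \in I j) (hja : j \notin I a) (hma : m \in I a) (hmj : m \notin I j).
Hypothesis hmax : forall y, y \in I a -> y \notin I j -> cyc_rank a y <= cyc_rank a m.

Lemma exit_before_j : cyc_rank a m < cyc_rank a j.
Proof.
rewrite ltnNge; apply: contra hmj => h.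
by have := necklace_persist hma h; rewrite shift_rank.
Qed.

Lemma j_a_m_order (t : E) : cyc_rank t j < cyc_rank t m ->
  cyc_rank t j < cyc_rank t a <= cyc_rank t m.
Proof.
have := exit_before_j; rewrite !(rank_rebase t a).
have := rank_lt t j; have := rank_lt t m; have := rank_lt t a.
by case: ifP; case: ifP; lia.
Qed.

Section Prefix.
Variables (t : E) (p : nat).
Hypothesis hp : p <= n.
Hypotheses (jP : cyc_rank t j < p) (mP : p <= cyc_rank t m).
Local Notation P := (cyc_prefix t p).

(* If a lies outside P_t(p), every element of I_a in P_t(p) comes <=_a after m,
   hence lies in I_j; j itself is a further element of I_j in P_t(p). *)
Lemma prefix_count_far : p <= cyc_rank t a -> #|I a :&: P| < #|I t :&: P|.
Proof.
move=> hpa; apply: leq_trans _ (prefix_count_le t hp j).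
apply/proper_card/properP; split; last by exists j; rewrite !inE ?hjj ?jP ?(negbTE hja).
apply/subsetP => y; rewrite !inE => /andP[hya hyP]; rewrite hyP andbT.
apply/negPn/negP => /(hmax hya); apply/negP; rewrite -ltnNge !(rank_rebase t a).
have := j_a_m_order (leq_trans jP mP); have := rank_lt t m.
by case: ifP; case: ifP; lia.
Qed.

(* If a lies inside P_t(p), then m \notin I_t (it would persist up to j), so m
   enters the necklace at some step s \in P_t(p) before a, where the count drops. *)
Lemma prefix_count_near : cyc_rank t a < p -> #|I a :&: P| < #|I t :&: P|.
Proof.
move=> hap.
have hmt : m \notin I t.
  apply: contra hmj => hmt.
  by have := necklace_persist hmt (ltnW (leq_trans jP mP)); rewrite shift_rank.
have hma' : m \in I (shift t (cyc_rank t a)) by rewrite shift_rank.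
have [i hia /andP[hi1 hi2]] := necklace_first_entry hmt hma'.
have hiP : shift t i \in P by apply/shift_in_prefix; rewrite hp andbT (ltn_trans hia).
have hmP : m \notin P by rewrite inE -leqNgt.
have hdrop := necklace_step_enter hiP hi1 hi2 hmP.
rewrite -(shift_rank t a); apply: leq_ltn_trans (prefix_count_decr t hp hia (ltnW hap)) _.
exact: leq_trans hdrop (prefix_count_le t hp _).
Qed.

End Prefix.

Lemma prefix_count_exchange (t : E) p : p <= n ->
  #|((I a :\ m) :|: [set j]) :&: cyc_prefix t p| <= #|I t :&: cyc_prefix t p|.
Proof.
move=> hp; have hIa := prefix_count_le t hp a.
set P := cyc_prefix t p in hIa *.
have hex := card_exchange P j hma.
case: (boolP (j \in P)) => jP; last by move: hex; rewrite (negbTE jP); lia.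
case: (boolP (m \in P)) => mP; first by move: hex; rewrite jP mP; lia.
have hlt : #|I a :&: P| < #|I t :&: P|.
  move: jP mP; rewrite !inE -leqNgt => jP mP.
  by case: (leqP p (cyc_rank t a)); [apply: prefix_count_far | apply: prefix_count_near].
by move: hex; rewrite jP (negbTE mP); lia.
Qed.

End Exchange.
End Necklace.

Theorem mainTheorem1 (n k : nat) (I : 'I_n -> {set 'I_n}) (M : {set {set 'I_n}})
  (hI : grassmann_necklace I) (hIk : forall t, #|I t| = k)
  (hM : M = positroid_of k I)
  (j : 'I_n) (hj : neck_perm I j != j) :
  forall a : 'I_n, j \notin I a ->
    (I a :\: I j != set0) /\
    ((I a :\ cyc_max a (I a :\: I j)) :|: [set j])
      \in [set H in M | j \in H].
Proof.
move=> a hja.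
have hjj : j \in I j.
  move: hj; rewrite /neck_perm; case: pickP => [x /andP[/andP[_ jIj] _]|] //=.
  by rewrite eqxx.
have hD : I a :\: I j != set0.
  apply: contraNneq hja => /eqP; rewrite setD_eq0 => hsub.
  by have /eqP -> : I a == I j by rewrite eqEcard hsub !hIk leqnn.
split=> //.
have [hmD hmax] := cyc_max_spec a hD.
set m := cyc_max a (I a :\: I j) in hmD hmax *.
move: hmD; rewrite in_setD => /andP[hmj hma].
have hcard : #|(I a :\ m) :|: [set j]| = k.
  rewrite setUC cardsU1 in_setD1 (negbTE hja) andbF add1n.
  by rewrite -(hIk a) (cardsD1 m (I a)) hma.
rewrite inE hM !inE eqxx orbT andbT hcard eqxx /=.
apply/forallP => t; apply: gale_of_prefix_counts; first by rewrite hcard hIk.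
move=> q hq; apply: prefix_count_exchange => // y hy hyj.
by apply: hmax; rewrite in_setD hy hyj.
Qed.
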